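(* Let $B=(b_{st})$ be an $n\times n$ symmetric matrix over the complex numbers. For $1\le i,j\le n$ let $B_{[ij]}$ be the matrix obtained from $B$ by replacing the entries in positions $(i,j)$ and $(j,i)$ by $0$ (all other entries unchanged), and for $i<j$ let $B^{i,j}_{i,j}$ be the submatrix of $B$ obtained by deleting rows $i,j$ and columns $i,j$. Let $2m$ be the number of nonzero off-diagonal entries of $B$ and let $c$ be the number of zero entries on the diagonal of $B$. Then $$(m-c)\,d_2(B)=\sum_{(i,j)\in I_1} d_2(B_{[ij]})+\sum_{(i,j)\in I_2} b_{ij}^2\, d_2(B^{i,j}_{i,j}),$$ where $I_1=\{(i,j): b_{ij}\ne 0,\ 1\le i\le j\le n\}$ and $I_2=\{(i,j): b_{ij}\ne 0,\ 1\le i<j\le n\}$.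
   Context: For an $n\times n$ matrix $M=(m_{ij})$ ($n\ge 2$), the second immanant is $d_2(M)=\sum_{\sigma\in S_n}\chi_2(\sigma)\prod_{s=1}^n m_{s\sigma(s)}$, where $\chi_2$ is the irreducible character of $S_n$ corresponding to the partition $(2,1^{n-2})$. It satisfies $d_2(X)=\sum_{i=1}^k x_{ii}\det(X(i))-\det(X)$ for a $k\times k$ matrix $X$, where $X(i)$ is $X$ with row and column $i$ deleted; for matrices of order less than $2$, $d_2$ is understood via this identity, with the determinant of the empty matrix equal to $1$. *)

From HB Require Import structures.
From mathcomp Require Import all_boot all_order all_algebra all_fingroup.
From mathcomp Require Import complex.
From mathcomp Require Import reals.
Set Implicit Arguments. Unset Strict Implicit. Unset Printing Implicit Defensive.
Import Order.TTheory GRing.Theory Num.Theory.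
Local Open Scope ring_scope.

(* Second immanant: character chi_2 of the partition (2,1^{k-2}) is
   sigma |-> sgn(sigma) * (#fixed points of sigma - 1). *)
Definition chi2 (k : nat) (s : 'S_k) : int :=
  (-1) ^+ s * ((#|[set x | s x == x]|)%:Z - 1).

Definition d2 {F : comNzRingType} (k : nat) (A : 'M[F]_k) : F :=
  \sum_(s : 'S_k) (chi2 s)%:~R * \prod_(i < k) A i (s i).

Definition zero_pair {F : comNzRingType} (n : nat) (B : 'M[F]_n) (i j : 'I_n)
  : 'M[F]_n :=
  \matrix_(s, t) (if ((s == i) && (t == j)) || ((s == j) && (t == i))
                  then 0 else B s t).

(* B^{i,j}_{i,j} : delete rows i,j and columns i,j (meaningful for i <> j) *)
Definition minor2 {F : comNzRingType} (n : nat) (B : 'M[F]_n) (i j : 'I_n)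
  : 'M[F]_(n.-1.-1) :=
  match unlift i j with
  | Some j' => row' j' (col' j' (row' i (col' i B)))
  | None => 0
  end.

From HB Require Import structures.
From mathcomp Require Import all_boot all_order all_algebra all_fingroup.
From mathcomp Require Import complex.
From mathcomp Require Import reals.
From mathcomp Require Import ring.
Set Implicit Arguments. Unset Strict Implicit. Unset Printing Implicit Defensive.
Import Order.TTheory GRing.Theory Num.Theory.
Local Open Scope ring_scope.

(* Expand every immanant as a sum over permutations s of chi2(s) w(s), where
   w(s) = prod_k B k (s k).  Zeroing b_ij and b_ji kills exactly the terms of
   d2(B) in which s meets the pair, i.e. s i = j or s j = i.  The terms in which
   s swaps i and j are those of r (i j) with r fixing i and j; they add up to
   - b_ij b_ji d2(B^{ij}_{ij}).  So the right-hand side is the sum over s of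
   (|I1| - N1(s) - N2(s)) chi2(s) w(s), where N1(s) and N2(s) count the pairs of
   I1 met by s and of I2 swapped by s.  When w(s) <> 0 every pair met by s lies
   in I1, and the pairs {k, s k} account for each k exactly once, so
   N1(s) + N2(s) = n; and |I1| = m + n - c. *)

Section PairBigops.
Variables (R : Type) (idx : R) (op : Monoid.com_law idx) (n : nat).
Implicit Type G : 'I_n * 'I_n -> R.

Lemma big_pairs_upper_lower G :
  \big[op/idx]_p G p = op (\big[op/idx]_(p : 'I_n * 'I_n | (p.1 <= p.2)%N) G p)
                          (\big[op/idx]_(p : 'I_n * 'I_n | (p.1 < p.2)%N) G (p.2, p.1)).
Proof.
rewrite (bigID (fun p : 'I_n * 'I_n => (p.1 <= p.2)%N)) /=; congr (op _ _).
rewrite (reindex_inj (can_inj swap_pairK)) /=.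
by apply: eq_bigl => -[a b]; rewrite /= -ltnNge.
Qed.

Lemma big_upper_diag G :
  \big[op/idx]_(p : 'I_n * 'I_n | (p.1 <= p.2)%N) G p =
  op (\big[op/idx]_(p : 'I_n * 'I_n | (p.1 < p.2)%N) G p) (\big[op/idx]_k G (k, k)).
Proof.
rewrite (bigID (fun p : 'I_n * 'I_n => (p.1 < p.2)%N)) /=; congr (op _ _).
  by apply: eq_bigl => p; rewrite andb_idl // => /ltnW.
rewrite (eq_bigl (fun p : 'I_n * 'I_n => p.2 == p.1)); last first.
  by move=> p; rewrite -leqNgt -eqn_leq eq_sym.
transitivity (\big[op/idx]_a \big[op/idx]_(b | b == a) G (a, b)).
  by rewrite pair_big_dep; apply: eq_big => -[a b].
by apply: eq_bigr => a _; rewrite big_pred1_eq.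
Qed.

End PairBigops.

Lemma card_set_sum_nat (T : finType) (P : pred T) : #|[set x | P x]| = (\sum_x P x)%N.
Proof. by rewrite -sum1dep_card big_mkcond; apply: eq_bigr => x _; case: (P x). Qed.

Definition signed_fix (a : int) (k : nat) (s : 'S_k) : int :=
  (-1) ^+ s * ((#|[set x | s x == x]|)%:Z + a).

Lemma chi2E k (s : 'S_k) : chi2 s = signed_fix (-1) s.
Proof. by []. Qed.

Lemma card_fix_lift_perm n (i : 'I_n.+1) (s : 'S_n) :
  #|[set x | lift_perm i i s x == x]| = #|[set x | s x == x]|.+1.
Proof.
rewrite (cardsD1 i) inE lift_perm_id eqxx add1n; congr _.+1.
rewrite -(card_imset _ (@lift_inj _ i)); congr #|pred_of_set _|.
apply/setP => y; case: (unliftP i y) => [y'|] ->; rewrite !inE.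
  rewrite eq_sym neq_lift lift_perm_lift (inj_eq (@lift_inj _ i)).
  by rewrite mem_imset ?inE //; exact: lift_inj.
by rewrite eqxx; apply/esym/imsetP => -[x _ /eqP]; rewrite (negbTE (neq_lift _ _)).
Qed.

Lemma card_fix_mul_tperm n (r : 'S_n) (i j : 'I_n) : i != j -> r i = i -> r j = j ->
  #|[set x | (r * tperm i j)%g x == x]|.+2 = #|[set x | r x == x]|.
Proof.
move=> nij ri rj.
rewrite [RHS](cardsD1 i) inE ri eqxx add1n (cardsD1 j) !inE eq_sym nij rj eqxx add1n.
do 2!congr _.+1; apply: eq_card => x; rewrite !inE permM.
have [->|nxi] := eqVneq x i; first by rewrite ri tpermL eq_sym (negbTE nij).
have [->|nxj] := eqVneq x j; first by rewrite rj tpermR (negbTE nij) eqxx.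
have rxi : i != r x by rewrite -{1}ri (inj_eq perm_inj) eq_sym.
have rxj : j != r x by rewrite -{1}rj (inj_eq perm_inj) eq_sym.
by rewrite tpermD.
Qed.

Lemma signed_fix_lift_perm a n (i : 'I_n.+1) (s : 'S_n) :
  signed_fix a (lift_perm i i s) = signed_fix (a + 1) s.
Proof.
by rewrite /signed_fix card_fix_lift_perm odd_lift_perm addbb -addn1 PoszD addrAC addrA.
Qed.

Lemma signed_fix_mul_tperm a n (r : 'S_n) (i j : 'I_n) : i != j -> r i = i -> r j = j ->
  signed_fix a (r * tperm i j)%g = - signed_fix (a - 2) r.
Proof.
move=> nij ri rj; rewrite /signed_fix odd_permM odd_tperm nij signr_addb.
rewrite -(card_fix_mul_tperm nij ri rj) -addn2 PoszD.
move: ((-1) ^+ _ : int) (Posz _) => e x; ring.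
Qed.

Section PermExpansion.
Variable F : comNzRingType.

Lemma sum_perm_fix_prod n (A : 'M[F]_n.+1) (i : 'I_n.+1) (g : 'S_n.+1 -> F) :
  \sum_(s : 'S_n.+1 | s i == i) g s * \prod_k A k (s k) =
  A i i * \sum_(t : 'S_n) g (lift_perm i i t) * \prod_k row' i (col' i A) k (t k).
Proof.
rewrite (reindex (lift_perm i i)); last first.
  pose unlift_perm a (s : 'S_n.+1) k := odflt k (unlift (s a) (s (lift a k))).
  have unlift_permK a (s : 'S_n.+1) k : lift (s a) (unlift_perm a s k) = s (lift a k).
    rewrite /unlift_perm; have:= neq_lift a k.
    by rewrite -(can_eq (permK s)) => /unlift_some[] ? ? ->.
  have unlift_perm_inj : injective (unlift_perm i _).
    move=> s; apply: can_inj (unlift_perm (s i) s^-1%g) _ => k'.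
    by rewrite {1}/unlift_perm unlift_permK !permK liftK.
  exists (fun s => perm (unlift_perm_inj s)) => [s _ | s].
    by apply/permP=> k'; rewrite permE /unlift_perm lift_perm_lift lift_perm_id liftK.
  move/(s _ =P _) => si; apply/permP=> k.
  case: (unliftP i k) => [k'|] ->; rewrite ?lift_perm_id //.
  by rewrite lift_perm_lift permE -unlift_permK si.
rewrite big_distrr /=; apply: eq_big => [s | s _]; first by rewrite lift_perm_id eqxx.
rewrite (bigD1_ord i) //= lift_perm_id mulrCA; congr (_ * (_ * _)).
by apply: eq_bigr => k _; rewrite !mxE lift_perm_lift.
Qed.

Lemma sum_perm_swap_prod n (A : 'M[F]_n.+2) (i : 'I_n.+2) (j' : 'I_n.+1) :
  \sum_(s : 'S_n.+2 | (s i == lift i j') && (s (lift i j') == i))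
     (chi2 s)%:~R * \prod_k A k (s k)
  = - (A i (lift i j') * A (lift i j') i) * d2 (row' j' (col' j' (row' i (col' i A)))).
Proof.
(* Writing s = r (i j) costs r two fixed points and deleting i and j gives them
   back, so only the sign of the transposition survives. *)
set j := lift i j'; have nij : i != j := neq_lift i j'.
pose At := \matrix_(a, b) A a (tperm i j b).
rewrite (reindex_inj (mulIg (tperm i j))) /=.
transitivity (\sum_(r : 'S_n.+2 | r i == i)
   ((r j == j)%:R * (- signed_fix (-3) r)%:~R) * \prod_k At k (r k)).
  rewrite big_mkcond [RHS]big_mkcond; apply: eq_bigr => r _.
  rewrite !permM (canF_eq (tpermK _ _)) tpermR (canF_eq (tpermK _ _)) tpermL.
  have [ri|] := eqVneq (r i) i; last by [].
  have [rj|] := eqVneq (r j) j; last by rewrite mul0r mul0r.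
  rewrite chi2E signed_fix_mul_tperm // mul1r.
  by congr (_ * _); apply: eq_bigr => k _; rewrite !mxE permM.
rewrite sum_perm_fix_prod mxE tpermL.
transitivity (A i j * \sum_(u : 'S_n.+1 | u j' == j')
   (- signed_fix (-2) u)%:~R * \prod_k row' i (col' i At) k (u k)).
  congr (_ * _); rewrite [RHS]big_mkcond; apply: eq_bigr => u _.
  rewrite lift_perm_lift (inj_eq (@lift_inj _ i)) signed_fix_lift_perm.
  by case: eqP; rewrite ?mul1r ?mul0r.
rewrite sum_perm_fix_prod !mxE tpermR mulrA mulNr -mulrN -sumrN; congr (_ * _).
apply: eq_bigr => v _; rewrite signed_fix_lift_perm chi2E mulrNz mulNr; congr (- (_ * _)).
apply: eq_bigr => k _; rewrite !mxE tpermD ?neq_lift //.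
by rewrite (inj_eq (@lift_inj _ i)) neq_lift.
Qed.

End PermExpansion.

Definition perm_meets n (s : 'S_n) (i j : 'I_n) : bool := (s i == j) || (s j == i).
Definition perm_swaps n (s : 'S_n) (i j : 'I_n) : bool := (s i == j) && (s j == i).

Lemma sum_perm_graph n (s : 'S_n) : (\sum_(p : 'I_n * 'I_n) (s p.1 == p.2))%N = n.
Proof.
rewrite -(pair_bigA _ (fun a b => nat_of_bool (s a == b))) /=.
rewrite -[RHS]card_ord -sum1_card; apply: eq_bigr => a _.
by rewrite -big_mkcond /= (eq_bigl _ _ (fun b => eq_sym _ b)) big_pred1_eq.
Qed.

Lemma perm_meets_swaps_count n (s : 'S_n) :
  (\sum_(p : 'I_n * 'I_n | p.1 <= p.2) perm_meets s p.1 p.2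
   + \sum_(p : 'I_n * 'I_n | p.1 < p.2) perm_swaps s p.1 p.2)%N = n.
Proof.
rewrite -[RHS](sum_perm_graph s) big_pairs_upper_lower !big_upper_diag /=.
rewrite addnAC -big_split addnAC -big_split /=; congr (_ + _)%N.
  by apply: eq_bigr => p _; rewrite /perm_meets /perm_swaps; do 2!case: (_ == _).
by apply: eq_bigr => k _; rewrite /perm_meets orbb.
Qed.

Section D2Expansions.
Variable F : comNzRingType.

Definition d2_term n (A : 'M[F]_n) (s : 'S_n) : F := (chi2 s)%:~R * \prod_k A k (s k).

Lemma d2E n (A : 'M[F]_n) : d2 A = \sum_s d2_term A s.
Proof. by []. Qed.

Lemma d2_zero_pair n (A : 'M[F]_n) (i j : 'I_n) :
  d2 (zero_pair A i j) = d2 A - \sum_s (perm_meets s i j)%:R * d2_term A s.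
Proof.
rewrite !d2E -sumrB; apply: eq_bigr => s _; rewrite /d2_term mulrCA -mulrBr; congr (_ * _).
have [meet|nomeet] := boolP (perm_meets s i j).
  rewrite mul1r subrr.
  by case/orP: meet => /eqP si; [rewrite (bigD1 i) | rewrite (bigD1 j)];
    rewrite //= mxE si !eqxx ?orbT mul0r.
rewrite mul0r subr0; apply: eq_bigr => k _; rewrite mxE.
case: ifP => // /orP[] /andP[/eqP-> /eqP sk]; move: nomeet.
  by rewrite /perm_meets sk eqxx.
by rewrite /perm_meets sk eqxx orbT.
Qed.

Lemma d2_minor2 n (A : 'M[F]_n) (i j : 'I_n) : i != j -> A i j = A j i ->
  A i j ^+ 2 * d2 (minor2 A i j) = - \sum_s (perm_swaps s i j)%:R * d2_term A s.
Proof.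
case: n A i j => [|[|n]] A i j; first by case: i.
  by rewrite !ord1 eqxx.
move=> nij Aij; rewrite /minor2.
case: (unliftP i j) => [j'|] eq_j; last by rewrite eq_j eqxx in nij.
subst j.
rewrite expr2 {2}Aij -[LHS]opprK -mulNr -sum_perm_swap_prod big_mkcond; congr (- _).
by apply: eq_bigr => s _; rewrite /perm_swaps; case: ifP; rewrite ?mul1r ?mul0r.
Qed.

End D2Expansions.

Section SymmetricMatrix.
Variables (F : comNzRingType) (n : nat) (B : 'M[F]_n).
Hypothesis B_sym : B^T = B.

Lemma B_sym_entry a b : B a b = B b a.
Proof. by rewrite -{1}B_sym mxE. Qed.

Lemma sum_d2_zero_pair :
  \sum_(p : 'I_n * 'I_n | (p.1 <= p.2)%N && (B p.1 p.2 != 0)) d2 (zero_pair B p.1 p.2) =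
  #|[set p : 'I_n * 'I_n | (p.1 <= p.2)%N && (B p.1 p.2 != 0)]|%:R * d2 B
  - \sum_s (\sum_(p : 'I_n * 'I_n | (p.1 <= p.2)%N && (B p.1 p.2 != 0))
              perm_meets s p.1 p.2)%:R * d2_term B s.
Proof.
rewrite (eq_bigr _ (fun p _ => d2_zero_pair B p.1 p.2)) sumrB.
rewrite -sum1dep_card natr_sum mulr_suml; congr (_ - _).
  by apply: eq_bigr => p _; rewrite mul1r.
by rewrite exchange_big; apply: eq_bigr => s _; rewrite natr_sum mulr_suml.
Qed.

Lemma sum_d2_minor2 :
  \sum_(p : 'I_n * 'I_n | (p.1 < p.2)%N && (B p.1 p.2 != 0))
      B p.1 p.2 ^+ 2 * d2 (minor2 B p.1 p.2) =
  - \sum_s (\sum_(p : 'I_n * 'I_n | (p.1 < p.2)%N && (B p.1 p.2 != 0))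
              perm_swaps s p.1 p.2)%:R * d2_term B s.
Proof.
rewrite (eq_bigr (fun p => - \sum_s (perm_swaps s p.1 p.2)%:R * d2_term B s)).
  rewrite sumrN exchange_big; congr (- _).
  by apply: eq_bigr => s _; rewrite natr_sum mulr_suml.
move=> p /andP[lt_p _]; apply: d2_minor2 (B_sym_entry _ _).
by apply: contraTneq lt_p => ->; rewrite ltnn.
Qed.

Lemma perm_meets_support (s : 'S_n) (i j : 'I_n) :
  \prod_k B k (s k) != 0 -> perm_meets s i j -> B i j != 0.
Proof.
move=> s_supp /orP[] /eqP s_ij; apply: contraNneq s_supp => B_ij.
  by rewrite (bigD1 i) //= s_ij B_ij mul0r.
by rewrite (bigD1 j) //= s_ij B_sym_entry B_ij mul0r.
Qed.

Lemma support_meets_swaps_count (s : 'S_n) : \prod_k B k (s k) != 0 ->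
  (\sum_(p : 'I_n * 'I_n | (p.1 <= p.2)%N && (B p.1 p.2 != 0%R)) perm_meets s p.1 p.2
   + \sum_(p : 'I_n * 'I_n | (p.1 < p.2)%N && (B p.1 p.2 != 0%R)) perm_swaps s p.1 p.2)%N
  = n.
Proof.
move=> s_supp; rewrite -[RHS](perm_meets_swaps_count s) !big_mkcondr.
have meets_nz p : ~~ (B p.1 p.2 != 0%R) -> ~~ perm_meets s p.1 p.2.
  by apply: contra; apply: perm_meets_support.
congr (_ + _)%N; apply: eq_bigr => p _; case: ifP => // /negbT /meets_nz.
  by move/negbTE->.
by rewrite /perm_meets /perm_swaps => /norP[/negbTE-> _].
Qed.

Lemma card_support_pairs :
  (#|[set p : 'I_n * 'I_n | (p.1 != p.2) && (B p.1 p.2 != 0%R)]| %/ 2 + n =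
   #|[set p : 'I_n * 'I_n | (p.1 <= p.2)%N && (B p.1 p.2 != 0%R)]|
   + #|[set k : 'I_n | B k k == 0%R]|)%N.
Proof.
pose U := (\sum_(p : 'I_n * 'I_n | (p.1 < p.2)%N) (B p.1 p.2 != 0%R))%N.
have ltn_neq (p : 'I_n * 'I_n) : (p.1 < p.2)%N -> p.1 != p.2.
  by move=> lt_p; apply: contraTneq lt_p => ->; rewrite ltnn.
have andb_sum (P Q : pred ('I_n * 'I_n)) :
    (\sum_p (P p && Q p) = \sum_(p | P p) Q p)%N.
  by rewrite [RHS]big_mkcond; apply: eq_bigr => p _; case: (P p).
have -> : #|[set p : 'I_n * 'I_n | (p.1 != p.2) && (B p.1 p.2 != 0%R)]| = (U + U)%N.
  rewrite card_set_sum_nat big_pairs_upper_lower big_upper_diag /=.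
  rewrite [X in (_ + X + _)%N]big1 => [|k _]; last by rewrite eqxx.
  by rewrite addn0; congr (_ + _)%N; apply: eq_bigr => p /ltn_neq;
    rewrite 1?eq_sym B_sym_entry => ->.
rewrite addnn -mul2n mulKn // card_set_sum_nat andb_sum big_upper_diag -/U.
rewrite card_set_sum_nat -addnA -big_split /=; congr (_ + _)%N.
by rewrite -[LHS]card_ord -sum1_card; apply: eq_bigr => k _; case: eqP.
Qed.

Theorem d2_symmetric_expansion :
  let m := (#|[set p : 'I_n * 'I_n | (p.1 != p.2) && (B p.1 p.2 != 0%R)]| %/ 2)%N in
  let c := #|[set k : 'I_n | B k k == 0%R]| in
  (m%:R - c%:R) * d2 B =
    \sum_(p : 'I_n * 'I_n | (p.1 <= p.2)%N && (B p.1 p.2 != 0))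
        d2 (zero_pair B p.1 p.2)
  + \sum_(p : 'I_n * 'I_n | (p.1 < p.2)%N && (B p.1 p.2 != 0))
        B p.1 p.2 ^+ 2 * d2 (minor2 B p.1 p.2).
Proof.
rewrite /= sum_d2_zero_pair sum_d2_minor2 d2E !mulr_sumr -sumrB -sumrN -big_split /=.
apply: eq_bigr => s _; have [s_supp|s_supp] := eqVneq (\prod_k B k (s k)) 0.
  by rewrite /d2_term s_supp !mulr0 subr0 oppr0 addr0.
rewrite -!mulrBl -addrA -opprD -natrD support_meets_swaps_count //.
congr (_ * _); apply/eqP; rewrite subr_eq addrAC eq_sym subr_eq -!natrD.
by rewrite card_support_pairs.
Qed.

End SymmetricMatrix.

Theorem lemma2p4 (R : realType) (n : nat) (B : 'M[R[i]]_n) :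
  B^T = B ->
  let m := (#|[set p : 'I_n * 'I_n | (p.1 != p.2) && (B p.1 p.2 != 0%R)]| %/ 2)%N in
  let c := #|[set k : 'I_n | B k k == 0%R]| in
  (m%:R - c%:R) * d2 B =
    \sum_(p : 'I_n * 'I_n | (p.1 <= p.2)%N && (B p.1 p.2 != 0))
        d2 (zero_pair B p.1 p.2)
  + \sum_(p : 'I_n * 'I_n | (p.1 < p.2)%N && (B p.1 p.2 != 0))
        B p.1 p.2 ^+ 2 * d2 (minor2 B p.1 p.2).
Proof. exact: d2_symmetric_expansion. Qed.
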